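(* Let $\mathcal F,\mathcal G,\mathcal H$ be exact categories and $\gamma\colon\mathcal F\to\mathcal G$, $\eta\colon\mathcal G\to\mathcal H$ exact functors. (a) If $\eta\gamma$ reflects admissible epimorphisms (resp. admissible monomorphisms, resp. exact sequences), then so does $\gamma$. If $\eta\gamma$ satisfies ($*'$), then so does $\eta$. (b) If $\gamma$ satisfies ($*'$) and $\eta\gamma$ satisfies (i$'$), then $\eta$ satisfies (i$'$). (c) If $\gamma$ satisfies ($*'$) and $\eta\gamma$ satisfies ($**'$), then $\eta$ satisfies ($**'$). (d) If $\gamma$ satisfies ($*'$), and $\eta\gamma$ satisfies (i$'$), (ii$'$), ($*'$), ($**'$) and reflects admissible epimorphisms, then $\eta$ satisfies (ii$'$).
   Context: Exact categories in Quillen's sense. For an exact functor $\theta\colon\mathcal A\to\mathcal B$: (i$'$) for any $X\in\mathcal A$ and any admissible epimorphism $T\to\theta(X)$ in $\mathcal B$ there exist an admissible epimorphism $Z\to X$ in $\mathcal A$ and a morphism $\theta(Z)\to T$ such that $\theta(Z)\to T\to\theta(X)$ equals $\theta(Z\to X)$; (ii$'$) for any $X,Y\in\mathcal A$ and any morphism $g\colon\theta(X)\to\theta(Y)$ there exist an admissible epimorphism $p\colon X'\to X$ and a morphism $h\colon X'\to Y$ in $\mathcal A$ with $g\circ\theta(p)=\theta(h)$; ($*'$) for any $T\in\mathcal B$ there exist $U\in\mathcal A$ and an admissible epimorphism $\theta(U)\to T$; ($**'$) for any $X\in\mathcal A$ and any morphism $g\colon\theta(X)\to T$ in $\mathcal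 B$ there exist an admissible epimorphism $p\colon X'\to X$ in $\mathcal A$, a morphism $h\colon X'\to S$ in $\mathcal A$ and an admissible epimorphism $e\colon\theta(S)\to T$ in $\mathcal B$ with $g\circ\theta(p)=e\circ\theta(h)$. *)

From HB Require Import structures.
From mathcomp Require Import all_boot all_algebra.
Set Implicit Arguments. Unset Strict Implicit. Unset Printing Implicit Defensive.
Import GRing.Theory.
Local Open Scope ring_scope.

Record PreAddCat := {
  ob : Type;
  hom : ob -> ob -> zmodType;
  comp : forall a b c : ob, hom b c -> hom a b -> hom a c;
  idm : forall a : ob, hom a a;
  compA : forall a b c d (h : hom c d) (g : hom b c) (f : hom a b),
      comp h (comp g f) = comp (comp h g) f;
  comp1m : forall a b (f : hom a b), comp (idm b) f = f;
  compm1 : forall a b (f : hom a b), comp f (idm a) = f;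
  compDl : forall a b c (g1 g2 : hom b c) (f : hom a b),
      comp (g1 + g2) f = comp g1 f + comp g2 f;
  compDr : forall a b c (g : hom b c) (f1 f2 : hom a b),
      comp g (f1 + f2) = comp g f1 + comp g f2
}.
Arguments comp {p a b c}.
Arguments idm {p}.

Section Basic.
Variable C : PreAddCat.

Definition is_zero_obj (z : ob C) : Prop :=
  forall a : ob C, (forall f g : hom z a, f = g) /\ (forall f g : hom a z, f = g).

Definition is_biproduct (a b c : ob C) (i1 : hom a c) (i2 : hom b c)
    (p1 : hom c a) (p2 : hom c b) : Prop :=
  [/\ comp p1 i1 = idm a, comp p2 i2 = idm b, comp p2 i1 = 0, comp p1 i2 = 0
    & comp i1 p1 + comp i2 p2 = idm c].

Definition is_kernel (a b c : ob C) (i : hom a b) (p : hom b c) : Prop :=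
  comp p i = 0 /\
  forall (t : ob C) (x : hom t b), comp p x = 0 ->
    exists u : hom t a, comp i u = x /\ forall u' : hom t a, comp i u' = x -> u' = u.

Definition is_cokernel (a b c : ob C) (i : hom a b) (p : hom b c) : Prop :=
  comp p i = 0 /\
  forall (t : ob C) (x : hom b t), comp x i = 0 ->
    exists u : hom c t, comp u p = x /\ forall u' : hom c t, comp u' p = x -> u' = u.

Definition is_iso (a b : ob C) (f : hom a b) : Prop :=
  exists g : hom b a, comp g f = idm a /\ comp f g = idm b.

(* commutative square  A --f--> B ; A --g--> A' ; A' --f'--> B' ; B --g'--> B'
   which is a pushout *)
Definition is_pushout (a b a' b' : ob C) (f : hom a b) (g : hom a a')
    (f' : hom a' b') (g' : hom b b') : Prop :=
  comp g' f = comp f' g /\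
  forall (t : ob C) (x : hom b t) (y : hom a' t), comp x f = comp y g ->
    exists u : hom b' t, (comp u g' = x /\ comp u f' = y) /\
      forall u' : hom b' t, comp u' g' = x -> comp u' f' = y -> u' = u.

(* commutative square  B' --g'--> B ; B' --f'--> A' ; B --f--> A ; A' --g--> A
   which is a pullback of f along g *)
Definition is_pullback (a b a' b' : ob C) (f : hom b a) (g : hom a' a)
    (f' : hom b' a') (g' : hom b' b) : Prop :=
  comp f g' = comp g f' /\
  forall (t : ob C) (x : hom t b) (y : hom t a'), comp f x = comp g y ->
    exists u : hom t b', (comp g' u = x /\ comp f' u = y) /\
      forall u' : hom t b', comp g' u' = x -> comp f' u' = y -> u' = u.
End Basic.

Record AddCat := {
  acat :> PreAddCat;
  has_zero : exists z : ob acat, is_zero_obj z;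
  has_biprod : forall a b : ob acat, exists (c : ob acat) (i1 : hom a c) (i2 : hom b c)
      (p1 : hom c a) (p2 : hom c b), is_biproduct i1 i2 p1 p2
}.

Section ExactAx.
Variable C : PreAddCat.
Variable conf : forall a b c : ob C, hom a b -> hom b c -> Prop.

Definition adm_mono_of (a b : ob C) (i : hom a b) : Prop :=
  exists (c : ob C) (p : hom b c), conf i p.
Definition adm_epi_of (b c : ob C) (p : hom b c) : Prop :=
  exists (a : ob C) (i : hom a b), conf i p.

Definition exact_axioms : Prop :=
      (forall a b c (i : hom a b) (p : hom b c), conf i p -> is_kernel i p /\ is_cokernel i p) /\
      (forall a b c a' b' c' (i : hom a b) (p : hom b c) (i' : hom a' b') (p' : hom b' c')
          (al : hom a a') (be : hom b b') (ga : hom c c'),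
          conf i p -> is_iso al -> is_iso be -> is_iso ga ->
          comp be i = comp i' al -> comp ga p = comp p' be -> conf i' p') /\
      (forall a, adm_mono_of (idm a) /\ adm_epi_of (idm a)) /\
      (forall a b c (f : hom a b) (g : hom b c), adm_mono_of f -> adm_mono_of g -> adm_mono_of (comp g f)) /\
      (forall a b c (f : hom a b) (g : hom b c), adm_epi_of f -> adm_epi_of g -> adm_epi_of (comp g f)) /\
      (forall a b a' (f : hom a b) (g : hom a a'), adm_mono_of f ->
          exists (b' : ob C) (f' : hom a' b') (g' : hom b b'),
            is_pushout f g f' g' /\ adm_mono_of f') /\
      (forall a b a' (f : hom b a) (g : hom a' a), adm_epi_of f ->
          exists (b' : ob C) (f' : hom b' a') (g' : hom b' b),
            is_pullback f g f' g' /\ adm_epi_of f').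
End ExactAx.

Record ExactCat := {
  ecat :> AddCat;
  conf : forall a b c : ob ecat, hom a b -> hom b c -> Prop;  (* the exact sequences (conflations) *)
  ecat_ax : exact_axioms conf
}.
Arguments conf {e a b c}.

Definition adm_mono (E : ExactCat) (a b : ob E) (i : hom a b) := adm_mono_of (@conf E) i.
Definition adm_epi (E : ExactCat) (b c : ob E) (p : hom b c) := adm_epi_of (@conf E) p.

Record FunData (A B : PreAddCat) := {
  fob : ob A -> ob B;
  fmor : forall a b : ob A, hom a b -> hom (fob a) (fob b)
}.
Arguments fob {A B} f _.
Arguments fmor {A B} f {a b} _.

Definition fcomp (A B C : PreAddCat) (eta : FunData B C) (ga : FunData A B) : FunData A C :=
  {| fob := fun a => fob eta (fob ga a);
     fmor := fun a b f => fmor eta (fmor ga f) |}.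

Definition is_exact_functor (A B : ExactCat) (F : FunData A B) : Prop :=
  [/\ (forall a, fmor F (idm a) = idm (fob F a)),
      (forall a b c (g : hom b c) (f : hom a b), fmor F (comp g f) = comp (fmor F g) (fmor F f)),
      (forall a b (f g : hom a b), fmor F (f + g) = fmor F f + fmor F g)
    & (forall a b c (i : hom a b) (p : hom b c), conf i p -> conf (fmor F i) (fmor F p))].

Record ExactFunctor (A B : ExactCat) := {
  efun :> FunData A B;
  efun_exact : is_exact_functor efun
}.

Section Props.
Variables (A B : ExactCat) (F : FunData A B).

Definition reflects_adm_epi : Prop :=
  forall (x y : ob A) (f : hom x y), adm_epi (fmor F f) -> adm_epi f.
Definition reflects_adm_mono : Prop :=
  forall (x y : ob A) (f : hom x y), adm_mono (fmor F f) -> adm_mono f.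
Definition reflects_exact : Prop :=
  forall (x y z : ob A) (i : hom x y) (p : hom y z), conf (fmor F i) (fmor F p) -> conf i p.

Definition cond_i' : Prop :=
  forall (X : ob A) (T : ob B) (t : hom T (fob F X)), adm_epi t ->
    exists (Z : ob A) (z : hom Z X) (m : hom (fob F Z) T),
      adm_epi z /\ comp t m = fmor F z.

Definition cond_ii' : Prop :=
  forall (X Y : ob A) (g : hom (fob F X) (fob F Y)),
    exists (X' : ob A) (p : hom X' X) (h : hom X' Y),
      adm_epi p /\ comp g (fmor F p) = fmor F h.

Definition cond_star' : Prop :=
  forall T : ob B, exists (U : ob A) (e : hom (fob F U) T), adm_epi e.

Definition cond_starstar' : Prop :=
  forall (X : ob A) (T : ob B) (g : hom (fob F X) T),
    exists (X' S : ob A) (p : hom X' X) (h : hom X' S) (e : hom (fob F S) T),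
      [/\ adm_epi p, adm_epi e & comp g (fmor F p) = comp e (fmor F h)].
End Props.

From mathcomp Require Import all_boot all_algebra.

(* When γ satisfies ( *' ), every object of G is the target of an admissible
   epimorphism out of the image of γ.  A property of η is then obtained from
   the same property of ηγ by precomposing with such covers and pulling back
   admissible epimorphisms in G; exact functors and composition keep the
   resulting maps admissible epimorphisms. *)

Section ExactCategory.
Variable E : ExactCat.

Lemma adm_epi_comp (a b c : ob E) (f : hom a b) (g : hom b c) :
  adm_epi f -> adm_epi g -> adm_epi (comp g f).
Proof. by have [_ [_ [_ [_ [epiM _]]]]] := ecat_ax E; apply: epiM. Qed.

Lemma adm_epi_pullback (a b a' : ob E) (f : hom b a) (g : hom a' a) :
  adm_epi f -> exists (b' : ob E) (f' : hom b' a') (g' : hom b' b),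
    comp f g' = comp g f' /\ adm_epi f'.
Proof.
have [_ [_ [_ [_ [_ [_ pullback]]]]]] := ecat_ax E.
move=> epi_f; have [b' [f' [g' [[fg'E _] epi_f']]]] := pullback _ _ _ f g epi_f.
by exists b', f', g'.
Qed.

End ExactCategory.

Arguments adm_epi_comp {E a b c f g}.
Arguments adm_epi_pullback {E a b a'} f g.

Section ExactFunctorTheory.
Variables (A B : ExactCat) (F : ExactFunctor A B).

Lemma efun_comp (a b c : ob A) (g : hom b c) (f : hom a b) :
  fmor F (comp g f) = comp (fmor F g) (fmor F f).
Proof. by case: (efun_exact F). Qed.

Lemma efun_conf (a b c : ob A) (i : hom a b) (p : hom b c) :
  conf i p -> conf (fmor F i) (fmor F p).
Proof. by case: (efun_exact F) => _ _ _; apply. Qed.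

Lemma efun_adm_epi (a b : ob A) (f : hom a b) : adm_epi f -> adm_epi (fmor F f).
Proof. by move=> [c [i conf_if]]; exists (fob F c), (fmor F i); apply: efun_conf. Qed.

Lemma efun_adm_mono (a b : ob A) (f : hom a b) : adm_mono f -> adm_mono (fmor F f).
Proof. by move=> [c [p conf_fp]]; exists (fob F c), (fmor F p); apply: efun_conf. Qed.

End ExactFunctorTheory.

Arguments efun_adm_epi {A B} F {a b f}.
Arguments efun_adm_mono {A B} F {a b f}.
Arguments efun_conf {A B} F {a b c i p}.

Section Composite.
Variables (F G H : ExactCat) (eta : ExactFunctor G H).

Lemma reflects_adm_epi_fcomp (gam : FunData F G) :
  reflects_adm_epi (fcomp eta gam) -> reflects_adm_epi gam.
Proof. by move=> refl x y f /(efun_adm_epi eta); apply: refl. Qed.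

Lemma reflects_adm_mono_fcomp (gam : FunData F G) :
  reflects_adm_mono (fcomp eta gam) -> reflects_adm_mono gam.
Proof. by move=> refl x y f /(efun_adm_mono eta); apply: refl. Qed.

Lemma reflects_exact_fcomp (gam : FunData F G) :
  reflects_exact (fcomp eta gam) -> reflects_exact gam.
Proof. by move=> refl x y z i p /(efun_conf eta); apply: refl. Qed.

Lemma cond_star'_fcomp (gam : FunData F G) :
  cond_star' (fcomp eta gam) -> cond_star' eta.
Proof. by move=> cover T; have [U [e epi_e]] := cover T; exists (fob gam U), e. Qed.

Variable gam : ExactFunctor F G.
Hypothesis cover : cond_star' gam.

Lemma cond_i'_fcomp : cond_i' (fcomp eta gam) -> cond_i' eta.
Proof.
move=> lift X T t epi_t.
have [U [e epi_e]] := cover X.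
have [T' [t' [g' [tg'E epi_t']]]] := adm_epi_pullback t (fmor eta e) epi_t.
have [Z [z [m [epi_z t'mE]]]] := lift U T' t' epi_t'.
exists (fob gam Z), (comp e (fmor gam z)), (comp g' m); split.
  exact: adm_epi_comp (efun_adm_epi gam epi_z) epi_e.
by rewrite compA tg'E -compA t'mE efun_comp.
Qed.

Lemma cond_starstar'_fcomp : cond_starstar' (fcomp eta gam) -> cond_starstar' eta.
Proof.
move=> factor X T g.
have [U [e epi_e]] := cover X.
have [X' [S [p [h [e' [epi_p epi_e' gepE]]]]]] := factor U T (comp g (fmor eta e)).
exists (fob gam X'), (fob gam S), (comp e (fmor gam p)), (fmor gam h), e'; split=> //.
  exact: adm_epi_comp (efun_adm_epi gam epi_p) epi_e.
by rewrite efun_comp compA -gepE.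
Qed.

(* Cover X and Y by eX and eY, pull eY back along g ∘ η eX, cover the pullback
   by an image of ηγ using (i'), and lift the resulting map with (ii'). *)
Lemma cond_ii'_fcomp :
  cond_i' (fcomp eta gam) -> cond_ii' (fcomp eta gam) -> cond_ii' eta.
Proof.
move=> lift_epi lift_map X Y g.
have [U [eX epi_eX]] := cover X.
have [V [eY epi_eY]] := cover Y.
have [P [q [r [rqE epi_q]]]] :=
  adm_epi_pullback (fmor eta eY) (comp g (fmor eta eX)) (efun_adm_epi eta epi_eY).
have [Z [z [m [epi_z qmE]]]] := lift_epi U P q epi_q.
have [Z' [p [h [epi_p rmE]]]] := lift_map Z V (comp r m).
exists (fob gam Z'), (comp eX (comp (fmor gam z) (fmor gam p))), (comp eY (fmor gam h)).
split.
  apply: adm_epi_comp epi_eX.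
  exact: adm_epi_comp (efun_adm_epi gam epi_p) (efun_adm_epi gam epi_z).
rewrite /= in qmE rmE.
by rewrite !efun_comp -rmE -qmE !compA rqE.
Qed.

End Composite.

Theorem lemma0p8 (F G H : ExactCat) (gam : ExactFunctor F G) (eta : ExactFunctor G H) :
  let eg := fcomp eta gam in
  (* (a) *)
  (reflects_adm_epi eg -> reflects_adm_epi gam) /\
      (reflects_adm_mono eg -> reflects_adm_mono gam) /\
      (reflects_exact eg -> reflects_exact gam) /\
      (cond_star' eg -> cond_star' eta) /\
  (* (b) *)
      (cond_star' gam -> cond_i' eg -> cond_i' eta) /\
  (* (c) *)
      (cond_star' gam -> cond_starstar' eg -> cond_starstar' eta) /\
  (* (d) *)
    (cond_star' gam -> cond_i' eg -> cond_ii' eg -> cond_star' eg ->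
       cond_starstar' eg -> reflects_adm_epi eg -> cond_ii' eta).
Proof.
move=> eg; split; first exact: reflects_adm_epi_fcomp.
split; first exact: reflects_adm_mono_fcomp.
split; first exact: reflects_exact_fcomp.
split; first exact: cond_star'_fcomp.
split; first by move=> cover; apply: cond_i'_fcomp.
split; first by move=> cover; apply: cond_starstar'_fcomp.
by move=> cover lift_epi lift_map _ _ _; apply: cond_ii'_fcomp.
Qed.
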